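(* A finite simple graph $G$ is a circular-arc graph if and only if there is a circular ordering of $V(G)$ in which there are no four distinct vertices $a,b,c,d$ appearing clockwise in this order such that $bd\in E(G)$, $ad\notin E(G)$ and $bc\notin E(G)$ (equivalently, $G$ admits a $CA$-free circular ordering).
   Context: A circular ordering of a finite set is obtained by placing its elements at distinct points of a circle; vertices $a,b,c,d$ ''appear clockwise in this order'' if traversing the circle clockwise from $a$ one meets $b$, then $c$, then $d$. $CA$ is the circularly ordered pattern on $v_1,v_2,v_3,v_4$ (clockwise in this order) with required edge $v_2v_4$, required non-edges $v_1v_4$ and $v_2v_3$, and the other pairs unspecified; a circular ordering of $G$ is $CA$-free if no four vertices induce a circularly ordered graph represented by this pattern. A circular-arc graph is the intersection graph of a finite family of arcs of a circle. *)

From mathcomp Require Import all_boot.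
From Stdlib Require Import Reals.

Set Implicit Arguments.
Unset Strict Implicit.
Unset Printing Implicit Defensive.

(* The circle is R/Z (one full turn = 1); clockwise = increasing angle. *)
(* fractional part: frac x = x - floor x, in [0,1). *)
Definition frac (x : R) : R := (x - (IZR (up x) - 1))%R.

Definition simple_graph (T : finType) (E : rel T) : Prop :=
  (forall u v, E u v = E v u) /\ (forall u, E u u = false).

(* The closed arc starting at angle s and going clockwise for length l
   (0 <= l < 1), as a (periodic) set of angles. *)
Definition in_arc (s l x : R) : Prop := (frac (x - s) <= l)%R.

Definition circular_arc_graph (T : finType) (E : rel T) : Prop :=
  exists s l : T -> R,
    (forall v, 0 <= l v < 1)%R /\
    forall u v, u <> v ->
      (E u v <-> exists x : R, in_arc (s u) (l u) x /\ in_arc (s v) (l v) x).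

Definition circular_ordering (T : finType) (p : T -> R) : Prop :=
  (forall v, 0 <= p v < 1)%R /\ injective p.

Definition clockwise (T : finType) (p : T -> R) (a b c d : T) : Prop :=
  (0 < frac (p b - p a) < frac (p c - p a) /\ frac (p c - p a) < frac (p d - p a))%R.

Definition CA_free (T : finType) (E : rel T) (p : T -> R) : Prop :=
  ~ exists a b c d : T,
      clockwise p a b c d /\ E b d /\ ~~ E a d /\ ~~ E b c.

From Stdlib Require Import Reals Lra.
From mathcomp Require Import all_boot.

(* (=>) Place the vertices in the cyclic order of the starting points of their
   arcs.  In a CA pattern a, b, c, d the arcs of b and d meet, so one of them
   contains the start of the other.  If the arc of b contains the start of d it
   also contains the start of c, which lies in between, making bc an edge; if
   the arc of d contains the start of b it contains the start of a, making ad
   an edge.  When b and d start at the same point, both alternatives hold and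
   the ordering decides which one to use.
   (<=) Given a CA-free ordering, let the arc of v run clockwise from v as long
   as it meets only neighbours of v.  Two such arcs meet only if one contains
   the start of the other, i.e. only for adjacent vertices.  Conversely, if uv
   is an edge and neither arc contains the other's start, there is a
   non-neighbour x of u between u and v and a non-neighbour y of v between v
   and u, and then y, u, x, v is a CA pattern. *)

Set Implicit Arguments.
Unset Strict Implicit.
Unset Printing Implicit Defensive.

Local Open Scope R_scope.

Notation cw x y := (frac (y - x)).

Definition cyclic (x y z : R) : Prop := 0 < cw x y < cw x z.

Lemma frac_bounds x : 0 <= frac x < 1.
Proof. by rewrite /frac; have [] := archimed x; lra. Qed.

Lemma frac_id x : 0 <= x < 1 -> frac x = x.
Proof. by move=> ?; rewrite /frac -(tech_up x 1); lra. Qed.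

Lemma frac_addZ x k : frac (x + IZR k) = frac x.
Proof.
have [] := archimed x => ? ?.
by rewrite /frac -(tech_up (x + IZR k) (up x + k)) plus_IZR; lra.
Qed.

Lemma frac_add x y : frac (x + y) = frac (frac x + frac y).
Proof.
have -> : x + y = frac x + frac y + IZR ((up x - 1) + (up y - 1)).
  by rewrite /frac plus_IZR !minus_IZR; ring.
exact: frac_addZ.
Qed.

Lemma cw_frac x y : cw (frac x) (frac y) = cw x y.
Proof.
have -> : y - x = frac y - frac x + IZR ((up y - 1) - (up x - 1)).
  by rewrite /frac !minus_IZR; ring.
by rewrite frac_addZ.
Qed.

Lemma cw_refl x : cw x x = 0.
Proof. by rewrite Rminus_diag frac_id //; lra. Qed.

Lemma cw_cases x y : 0 <= x < 1 -> 0 <= y < 1 ->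
  (x <= y /\ cw x y = y - x) \/ (y < x /\ cw x y = y - x + 1).
Proof.
move=> ? ?; case: (Rle_lt_dec x y) => ?; [left | right]; split => //.
  by rewrite frac_id //; lra.
by rewrite -(frac_addZ (y - x) 1) frac_id //; lra.
Qed.

Lemma cw_tri x y z : cw x z = cw x y + cw y z \/ cw x z = cw x y + cw y z - 1.
Proof.
have -> : z - x = (y - x) + (z - y) by ring.
rewrite frac_add; have := frac_bounds (y - x); have := frac_bounds (z - y).
case: (Rlt_le_dec (cw x y + cw y z) 1) => ? ? ?.
  by left; rewrite frac_id //; lra.
by right; rewrite -(frac_addZ (cw x y + cw y z) (-1)) frac_id //; lra.
Qed.

Lemma cw_split x y z : cw x y <= cw x z -> cw x z = cw x y + cw y z.
Proof. by have := frac_bounds (z - y); case: (cw_tri x y z); lra. Qed.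

Lemma cw_swap x y : 0 < cw x y -> cw y x = 1 - cw x y.
Proof. by have := frac_bounds (x - y); have := cw_tri x y x; rewrite cw_refl; lra. Qed.

Lemma cw_pos x y : 0 <= x < 1 -> 0 <= y < 1 -> x <> y -> 0 < cw x y.
Proof. by move=> hx hy; case: (cw_cases hx hy) => -[? ->]; lra. Qed.

Lemma cyclic_neq x y z : cyclic x y z -> x <> y.
Proof. by move=> + xy; rewrite /cyclic xy cw_refl; lra. Qed.

Lemma cyclic_rot x y z : cyclic x y z -> cyclic y z x.
Proof.
move=> [xy_pos xy_xz]; rewrite /cyclic (cw_swap xy_pos).
by have := cw_split (Rlt_le _ _ xy_xz); have := frac_bounds (z - x); lra.
Qed.

Lemma clockwise_rot (T : finType) (p : T -> R) a b c d :
  clockwise p a b c d -> clockwise p b c d a.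
Proof.
move=> [[ab_pos ab_ac] ac_ad]; rewrite /clockwise (cw_swap ab_pos).
have := cw_split (Rlt_le _ _ ab_ac).
have := cw_split (Rlt_le _ _ (Rlt_trans _ _ _ ab_ac ac_ad)).
by have := frac_bounds (p d - p a); lra.
Qed.

Lemma cyclic_cases x y z : 0 <= x < 1 -> 0 <= y < 1 -> 0 <= z < 1 ->
  cyclic x y z -> x < y < z \/ y < z < x \/ z < x < y.
Proof.
move=> hx hy hz; rewrite /cyclic.
by case: (cw_cases hx hy) => -[? ->]; case: (cw_cases hx hz) => -[? ->]; lra.
Qed.

Lemma cw_le_of_weak x y z : 0 <= x < 1 -> 0 <= y < 1 -> 0 <= z < 1 ->
  x <= y <= z \/ y <= z < x \/ z < x <= y -> cw x y <= cw x z.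
Proof.
move=> hx hy hz.
by case: (cw_cases hx hy) => -[? ->]; case: (cw_cases hx hz) => -[? ->]; lra.
Qed.

Lemma arcs_meet s1 l1 s2 l2 x :
  in_arc s1 l1 x -> in_arc s2 l2 x -> cw s1 s2 <= l1 \/ cw s2 s1 <= l2.
Proof.
rewrite /in_arc => ? ?.
have := cw_tri s1 s2 x; have := cw_tri s2 s1 x.
have := frac_bounds (s2 - s1); have := frac_bounds (s1 - s2).
by have := frac_bounds (x - s1); have := frac_bounds (x - s2); lra.
Qed.

Lemma exists_Rmax_seq (T : eqType) (f : T -> R) x0 (s : seq T) :
  exists2 m, m \in x0 :: s & forall x, x \in x0 :: s -> f x <= f m.
Proof.
elim: s x0 => [|y s IH] x0.
  by exists x0 => [|x]; rewrite ?mem_seq1 // => /eqP ->; lra.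
have [m m_in m_max] := IH y.
case: (Rle_lt_dec (f x0) (f m)) => [x0_m | m_x0].
  exists m => [|x]; first by rewrite in_cons m_in orbT.
  by rewrite in_cons => /predU1P [-> // | /m_max].
exists x0 => [|x]; first exact: mem_head.
by rewrite in_cons => /predU1P [-> | /m_max]; lra.
Qed.

Section SortedPositions.

Variables (T : finType) (t : T -> R).

Definition le_start : rel T := fun u w => Rle_dec (t u) (t w).

Definition start_order : seq T := sort le_start (enum T).

Definition sorted_pos (v : T) : R := INR (index v start_order) / INR #|T|.

Lemma le_start_total : total le_start.
Proof.
move=> u w; apply/orP; case: (Rle_lt_dec (t u) (t w)) => ?.
  by left; apply/sumboolP.
by right; apply/sumboolP; lra.
Qed.

Lemma le_start_trans : transitive le_start.
Proof. by move=> y x z /sumboolP ? /sumboolP ?; apply/sumboolP; lra. Qed.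

Lemma mem_start_order v : v \in start_order.
Proof. by rewrite mem_sort mem_enum. Qed.

Lemma index_start_order_lt v : (index v start_order < #|T|)%N.
Proof. by rewrite cardT -(size_sort le_start) index_mem mem_start_order. Qed.

Lemma scaled_INR_lt (n i j : nat) :
  (0 < n)%N -> (i < j)%N <-> INR i / INR n < INR j / INR n.
Proof.
move=> /ltP /lt_0_INR n_pos; have ninv_pos := Rinv_0_lt_compat _ n_pos.
split => [/ltP /lt_INR ij | ij]; first exact: Rmult_lt_compat_r.
by apply/ltP/INR_lt; apply: Rmult_lt_reg_r ij.
Qed.

Lemma sorted_pos_ltE u w :
  sorted_pos u < sorted_pos w <-> (index u start_order < index w start_order)%N.
Proof.
have n_pos : (0 < #|T|)%N by apply: leq_ltn_trans (index_start_order_lt u).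
by rewrite /sorted_pos -scaled_INR_lt.
Qed.

Lemma sorted_pos_ordering : circular_ordering sorted_pos.
Proof.
split => [v | u w eq_uw].
  have n_pos : (0 < #|T|)%N by apply: leq_ltn_trans (index_start_order_lt v).
  have := (scaled_INR_lt _ _ n_pos).1 (index_start_order_lt v).
  rewrite Rdiv_diag; last by apply/not_0_INR/eqP; rewrite -lt0n.
  split => //; apply: Rle_mult_inv_pos; [exact: pos_INR | exact/lt_0_INR/ltP].
case: (ltngtP (index u start_order) (index w start_order)).
- by move/sorted_pos_ltE; lra.
- by move/sorted_pos_ltE; lra.
by move=> eq_i; rewrite -(nth_index u (mem_start_order u)) eq_i nth_index ?mem_start_order.
Qed.

Lemma sorted_pos_mono u w : sorted_pos u < sorted_pos w -> t u <= t w.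
Proof.
move/sorted_pos_ltE => lt_uw.
have sorted_order : sorted le_start start_order by apply: sort_sorted le_start_total _.
have in_range v : index v start_order \in [pred n | (n < size start_order)%N].
  by rewrite inE index_mem mem_start_order.
have := sorted_ltn_nth le_start_trans u sorted_order _ _ (in_range u) (in_range w) lt_uw.
by rewrite !nth_index ?mem_start_order // => /sumboolP.
Qed.

Hypothesis t_range : forall v, 0 <= t v < 1.

(* Strictly cyclic positions give weakly cyclic starts, unless the first and
   the last start coincide with their positions in the wrong order. *)
Lemma cw_le_of_cyclic x y z :
  cyclic (sorted_pos x) (sorted_pos y) (sorted_pos z) ->
  (t x = t z -> sorted_pos x < sorted_pos z) -> cw (t x) (t y) <= cw (t x) (t z).
Proof.
have [p_range _] := sorted_pos_ordering.
move=> cyc tie; have tzx : sorted_pos z < sorted_pos x -> t z < t x.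
  move=> zx; case: (Rle_lt_or_eq_dec _ _ (sorted_pos_mono zx)) => // tzx.
  by have := tie (esym tzx); lra.
apply: cw_le_of_weak => //.
case: (cyclic_cases (p_range x) (p_range y) (p_range z) cyc) => [|[]] [? ?].
- by left; split; apply: sorted_pos_mono.
- by right; left; split; [apply: sorted_pos_mono | apply: tzx].
- by right; right; split; [apply: tzx | apply: sorted_pos_mono].
Qed.

End SortedPositions.

Section ArcModelToOrdering.

Variables (T : finType) (E : rel T) (s l : T -> R).
Hypotheses (E_sym : symmetric E) (E_irr : irreflexive E).
Hypothesis l_range : forall v, 0 <= l v < 1.
Hypothesis E_arcs : forall u v, u <> v ->
  (E u v <-> exists x, in_arc (s u) (l u) x /\ in_arc (s v) (l v) x).

Let t v := frac (s v).
Let p := sorted_pos t.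

Lemma edge_of_start_in_arc u v : u <> v -> cw (t u) (t v) <= l u -> E u v.
Proof.
move=> uv; rewrite /t cw_frac => uv_in; apply/E_arcs => //.
by exists (s v); split; rewrite /in_arc // cw_refl; case: (l_range v).
Qed.

Lemma start_in_arc_of_edge u v :
  u <> v -> E u v -> cw (t u) (t v) <= l u \/ cw (t v) (t u) <= l v.
Proof. by move=> uv /(E_arcs uv) [x [ux vx]]; rewrite /t !cw_frac; apply: arcs_meet ux vx. Qed.

Lemma edge_of_cyclic x y z : x <> y -> cyclic (p x) (p y) (p z) ->
  (t x = t z -> p x < p z) -> cw (t x) (t z) <= l x -> E x y.
Proof.
move=> xy cyc tie xz; apply: edge_of_start_in_arc => //.
by have := cw_le_of_cyclic (fun v => frac_bounds (s v)) cyc tie; rewrite /t in xz *; lra.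
Qed.

Lemma ca_free_sorted_starts : CA_free E p.
Proof.
have [_ p_inj] := sorted_pos_ordering t.
move=> [a [b [c [d [abcd [Ebd [nEad nEbc]]]]]]].
have bcda := clockwise_rot abcd; have dabc := clockwise_rot (clockwise_rot bcda).
have bc : b <> c by move=> eq_bc; apply: (cyclic_neq (proj1 bcda)); rewrite eq_bc.
have da : d <> a by move=> eq_da; apply: (cyclic_neq (proj1 dabc)); rewrite eq_da.
have bd : b <> d by move=> eq_bd; rewrite eq_bd E_irr in Ebd.
have [[bd_in tie] | [db_in tie]] :
    (cw (t b) (t d) <= l b /\ (t b = t d -> p b < p d)) \/
    (cw (t d) (t b) <= l d /\ (t d = t b -> p d < p b)).
  case: (Req_dec (t b) (t d)) => [tbd | ntbd].
    rewrite tbd cw_refl; have [lb0 _] := l_range b; have [ld0 _] := l_range d.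
    by case: (Rtotal_order (p b) (p d)) => [| [/p_inj // | ]]; [left | right]; split.
  by case: (start_in_arc_of_edge bd Ebd) => ?; [left | right];
    split => // eq_t; exfalso; apply: ntbd; rewrite eq_t.
- by move/negP: nEbc; apply; apply: edge_of_cyclic bc (proj1 bcda) tie bd_in.
- by move/negP: nEad; rewrite E_sym; apply; apply: edge_of_cyclic da (proj1 dabc) tie db_in.
Qed.

End ArcModelToOrdering.

Section OrderingToArcModel.

Variables (T : finType) (E : rel T) (p : T -> R).
Hypothesis E_sym : symmetric E.
Hypotheses (p_ord : circular_ordering p) (p_free : CA_free E p).

Definition adj_upto (v w : T) : bool :=
  [forall x, Rlt_dec 0 (cw (p v) (p x)) && Rle_dec (cw (p v) (p x)) (cw (p v) (p w))
               ==> E v x].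

Definition max_nbr_arc (v : T) (lv : R) : Prop :=
  [/\ 0 <= lv < 1,
      forall u, u <> v -> cw (p v) (p u) <= lv -> E v u &
      forall u, lv < cw (p v) (p u) ->
        exists x, ~~ E v x /\ 0 < cw (p v) (p x) <= cw (p v) (p u)].

Lemma adj_upto_refl v : adj_upto v v.
Proof.
by apply/forallP => x; apply/implyP => /andP [/sumboolP + /sumboolP]; rewrite cw_refl; lra.
Qed.

Lemma cw_pos_of_neq u v : u <> v -> 0 < cw (p u) (p v).
Proof.
have [p_range p_inj] := p_ord; move=> uv.
by apply: cw_pos; [apply: p_range | apply: p_range | move/p_inj].
Qed.

Lemma cyclic_of_le u x v :
  x <> v -> 0 < cw (p u) (p x) <= cw (p u) (p v) -> cyclic (p u) (p x) (p v).
Proof.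
move=> /cw_pos_of_neq xv ux; have := cw_split (proj2 ux).
by case: ux; rewrite /cyclic; lra.
Qed.

Lemma exists_max_nbr_arc v : exists lv, max_nbr_arc v lv.
Proof.
have [m m_in m_max] := exists_Rmax_seq (fun w => cw (p v) (p w)) v (enum (adj_upto v)).
have adj_m : adj_upto v m.
  by move: m_in; rewrite in_cons mem_enum => /predU1P [-> | //]; apply: adj_upto_refl.
exists (cw (p v) (p m)); split; first exact: frac_bounds.
  move=> u uv vu_in; move/forallP/(_ u)/implyP: adj_m; apply.
  by apply/andP; split; apply/sumboolP => //; apply: cw_pos_of_neq; apply: nesym.
move=> u vu_out; have : ~~ adj_upto v u.
  apply/negP => adj_u; suff : cw (p v) (p u) <= cw (p v) (p m) by lra.
  by apply: m_max; rewrite in_cons mem_enum; apply/orP; right.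
move/forallPn => [x]; rewrite negb_imply => /andP [/andP [/sumboolP ? /sumboolP ?] nE].
by exists x.
Qed.

Lemma start_in_max_nbr_arc (l : T -> R) u v :
  (forall w, max_nbr_arc w (l w)) ->
  E u v -> cw (p u) (p v) <= l u \/ cw (p v) (p u) <= l v.
Proof.
move=> l_max Euv.
case: (Rle_lt_dec (cw (p u) (p v)) (l u)) => [| uv_out]; first by left.
case: (Rle_lt_dec (cw (p v) (p u)) (l v)) => [| vu_out]; first by right.
have [_ _ /(_ v uv_out) [x [nEux ux]]] := l_max u.
have [_ _ /(_ u vu_out) [y [nEvy vy]]] := l_max v.
have cyc_uxv : cyclic (p u) (p x) (p v).
  by apply: cyclic_of_le ux => eq_xv; rewrite eq_xv Euv in nEux.
have cyc_vyu : cyclic (p v) (p y) (p u).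
  by apply: cyclic_of_le vy => eq_yu; rewrite eq_yu E_sym Euv in nEvy.
have nEyv : ~~ E y v by rewrite E_sym.
exfalso; apply: p_free; exists y, u, x, v; split => //.
have uxvy : clockwise p u x v y := conj cyc_uxv (proj2 (cyclic_rot (cyclic_rot cyc_vyu))).
exact: clockwise_rot (clockwise_rot (clockwise_rot uxvy)).
Qed.

Lemma arc_model_of_ca_free : circular_arc_graph E.
Proof.
have [l l_max] := fin_all_exists exists_max_nbr_arc.
have l_range v : 0 <= l v < 1 by case: (l_max v).
exists p, l; split => // u v uv; split => [Euv | [x [ux vx]]].
  have [uv_in | vu_in] := start_in_max_nbr_arc l_max Euv;
    [exists (p v) | exists (p u)]; split; rewrite // /in_arc cw_refl;
    by case: (l_range u); case: (l_range v).
case: (arcs_meet ux vx) => [uv_in | vu_in].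
  by case: (l_max u) => _ /(_ v (nesym uv) uv_in).
by rewrite E_sym; case: (l_max v) => _ /(_ u uv vu_in).
Qed.

End OrderingToArcModel.

Theorem proposition2 (T : finType) (E : rel T) (HG : simple_graph E) :
  circular_arc_graph E <->
  exists p : T -> R, circular_ordering p /\ CA_free E p.
Proof.
have [E_sym E_irr] := HG.
split => [[s [l [l_range E_arcs]]] | [p [p_ord p_free]]].
  exists (sorted_pos (fun v => frac (s v))).
  by split; [apply: sorted_pos_ordering | apply: ca_free_sorted_starts].
exact: arc_model_of_ca_free p_ord p_free.
Qed.
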